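(* Let $n,q\in\mathbb{N}$ with $2\le q<n$ and let $0<\varepsilon<1$. Put $t_1=\lfloor\frac{n-q}{2}\rfloor-\lceil\log_2\frac1\varepsilon\rceil-2$ and $t_2=\lceil\frac{n-q}{2}\rceil+\lceil\log_2\frac1\varepsilon\rceil+2$. Then $$\sum_{c=\max\{0,t_1\}}^{\min\{t_2,n-q\}}\binom{n-q}{c}\big(2^{\,n-c-q}-1\big)^{c}\;\ge\;(1-\varepsilon)\sum_{c=0}^{n-q}\binom{n-q}{c}\big(2^{\,n-c-q}-1\big)^{c}.$$
   Context: Standard notation; $\log_2$ is the base-2 logarithm and $0^0=1$. *)

From mathcomp Require Import all_boot all_order all_algebra.
From mathcomp Require Import all_classical all_reals all_analysis.
Import Order.TTheory GRing.Theory Num.Theory.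
Local Open Scope ring_scope.

Definition log2 {R : realType} (x : R) : R := ln x / ln 2.

(* term  C(n-q, c) * (2^(n-c-q) - 1)^c  as a natural number
   (n - c - q >= 0 whenever c <= n - q, so 2^(n-c-q) >= 1, no truncation) *)
Definition term8p12 (n q c : nat) : nat :=
  ('C(n - q, c) * (2 ^ (n - c - q) - 1) ^ c)%N.

From mathcomp Require Import all_boot all_order all_algebra.
From mathcomp Require Import all_classical all_reals all_analysis.
From mathcomp Require Import zify lra.
Import Order.TTheory GRing.Theory Num.Theory.

Set Implicit Arguments.
Unset Strict Implicit.
Unset Printing Implicit Defensive.

(* Put m := n - q. Each summand is at most B(c) := C(m, c) 2^(c (m - c)), a bound
   that is symmetric under c |-> m - c, and by Bernoulli's inequality the central
   summand (c = m/2) is at least half of M := B(m/2).  Below the window,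
   c + l + 3 <= m/2 gives B(c) <= M 2^(c - m/2 - l - 3), so the lower tail is at
   most M / 2^(l+3) <= T / 2^(l+2), where T is the total sum; the upper tail is
   the mirror image.  Hence the mass outside the window is at most T / 2^l, and
   2^l >= 1/eps for l = ceil(log2 (1/eps)). *)

Definition summand (m c : nat) : nat := 'C(m, c) * (2 ^ (m - c) - 1) ^ c.

Definition summand_bound (m c : nat) : nat := 'C(m, c) * 2 ^ (c * (m - c)).

Definition central_bound (m : nat) : nat := 'C(m, m./2) * 2 ^ (m./2 * (m - m./2)).

Definition in_window (m l c : nat) : bool :=
  (m./2 <= c + l + 2) && (c <= m - m./2 + l + 2).

Lemma term8p12E n q c : term8p12 n q c = summand (n - q) c.
Proof. by rewrite /term8p12 subnAC. Qed.

Lemma summand_le_bound m c : summand m c <= summand_bound m c.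
Proof.
rewrite /summand /summand_bound leq_mul // mulnC expnM.
by case: c => [|c]; rewrite ?expn0 // leq_exp2r // leq_subr.
Qed.

Lemma summand_boundC m c : c <= m -> summand_bound m (m - c) = summand_bound m c.
Proof. by move=> le_cm; rewrite /summand_bound bin_sub // subKn // [(m - c) * _]mulnC. Qed.

Lemma leq_bin_half m c : 'C(m, c) <= 'C(m, m./2).
Proof.
have bin_incr k : k.+1 <= m - k -> 'C(m, k) <= 'C(m, k.+1).
  move=> lt_k; rewrite -(@leq_pmul2l k.+1) // mul_bin_left.
  by rewrite leq_mul.
have below d : 'C(m, m./2 - d) <= 'C(m, m./2).
  have half_le : m./2 + m./2 <= m by rewrite addnn -[leqRHS](odd_double_half m) leq_addl.
  elim: d => [|d IHd]; first by rewrite subn0.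
  apply: leq_trans IHd; case: (ltnP d m./2) => [lt_d|le_d].
    by rewrite -[m./2 - d](subnSK lt_d); apply: bin_incr; lia.
  by have [-> ->] : m./2 - d.+1 = 0 /\ m./2 - d = 0 by lia.
case: (leqP c m./2) => [le_c|lt_half]; first by rewrite -(subKn le_c) below.
case: (leqP c m) => [le_cm|lt_mc]; last by rewrite bin_small.
rewrite -bin_sub // -[m - c](@subKn _ m./2); first exact: below.
have := odd_double_half m; rewrite -addnn; case: (odd m) => /=; lia.
Qed.

Lemma expn_le_pred_add a k : 0 < a -> a ^ k <= (a - 1) ^ k + k * a ^ k.-1.
Proof.
move=> a_gt0; rewrite -leq_subLR subn_exp subKn // mul1n.
rewrite -[k in k * _]card_ord -sum_nat_const; apply: leq_sum => i _.
have le_ik : i <= k.-1 by have := ltn_ord i; lia.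
rewrite -[k.-1 in leqRHS](subnK le_ik) expnD leq_mul //.
by case: (nat_of_ord i) => [|j]; rewrite ?expn0 // leq_exp2r ?leq_subr.
Qed.

Lemma double_leq_pow2 c d : c <= d -> 2 * c <= 2 ^ d.
Proof.
case: d => [|d]; first by rewrite leqn0 => /eqP ->.
by move=> le_cd; rewrite expnS leq_pmul2l //; apply: leq_trans le_cd (ltn_expl _ _).
Qed.

(* Bernoulli: (1 - 2^-d)^c >= 1 - c 2^-d >= 1/2, since 2 c <= 2^d. *)
Lemma pow2_mul_le_double_pred c d : c <= d -> 2 ^ (c * d) <= 2 * (2 ^ d - 1) ^ c.
Proof.
move=> le_cd; have two_c := double_leq_pow2 le_cd.
have := expn_le_pred_add c (expn_gt0 2 d); rewrite [c * d]mulnC expnM.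
case: c le_cd two_c => [|c] _ two_c; first by rewrite !expn0.
rewrite expnS /=; set x := 2 ^ d; set y := (x - 1) ^ c.+1; set z := x ^ c.
have : 2 * c.+1 * z <= x * z by rewrite leq_mul.
lia.
Qed.

Lemma central_bound_le m : central_bound m <= 2 * summand m m./2.
Proof.
rewrite /central_bound /summand mulnCA leq_mul // pow2_mul_le_double_pred //.
by rewrite -[m in leqRHS](odd_double_half m) -addnn; lia.
Qed.

Lemma sum_pow2_lt k : \sum_(0 <= c < k) 2 ^ c < 2 ^ k.
Proof.
elim: k => [|k IHk]; first by rewrite big_nil.
by rewrite big_nat_recr //= expnS mul2n -addnn -addSn leq_add2r.
Qed.

(* With k := a - c, a * b - c * (a + b - c) = k * (b - c) >= k ^ 2 >= k + l + 3. *)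
Lemma low_exponent_gap a b c l : c + l + 3 <= a -> a <= b ->
  l + 3 + a + c * (a + b - c) <= a * b + c.
Proof.
move=> gap le_ab.
have [k def_a] : exists k, a = c + l + 3 + k by exists (a - (c + l + 3)); lia.
have [j def_b] : exists j, b = a + j by exists (b - a); lia.
subst b a; nia.
Qed.

Lemma half_le_uphalf m : m./2 <= m - m./2.
Proof. by have := odd_double_half m; rewrite -addnn; lia. Qed.

Lemma low_tail_le m l :
  2 ^ (l + 3) * \sum_(0 <= c < m.+1 | c + l + 3 <= m./2) summand_bound m c
  <= central_bound m.
Proof.
set a := m./2; have le_ab : a <= m - a := half_le_uphalf m.
have pointwise c : c + l + 3 <= a ->
    2 ^ (l + 3) * 2 ^ a * summand_bound m c <= central_bound m * 2 ^ c.
  move=> gap; rewrite /summand_bound /central_bound -/a mulnCA -[leqRHS]mulnA.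
  rewrite leq_mul ?leq_bin_half // -!expnD leq_pexp2l //.
  by have := low_exponent_gap gap le_ab; rewrite subnKC // /a; lia.
rewrite -(leq_pmul2r (expn_gt0 2 a)) mulnAC big_distrr /=.
apply: (@leq_trans (central_bound m * \sum_(0 <= c < a) 2 ^ c)); last first.
  by rewrite leq_mul // ltnW // sum_pow2_lt.
rewrite big_distrr [leqRHS](big_nat_widen _ _ m.+1) /=; last by rewrite /a; lia.
apply: leq_trans (leq_sum _ pointwise) _.
by apply: (sub_le_big leqnn (fun x y => leq_addr y x)) => c gap; lia.
Qed.

Lemma high_tail_le m l :
  2 ^ (l + 3) * \sum_(0 <= c < m.+1 | m - m./2 + l + 3 <= c) summand_bound m c
  <= central_bound m.
Proof.
rewrite big_nat_rev /= !big_mkcond.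
rewrite (eq_big_nat _ _ (F2 := fun c => if c + l + 3 <= m./2 then summand_bound m c else 0)).
  by rewrite -big_mkcond low_tail_le.
move=> c /andP[_ lt_c]; rewrite add0n subSS summand_boundC //.
by have -> : (m - m./2 + l + 3 <= m - c) = (c + l + 3 <= m./2) by lia.
Qed.

Lemma summand_le_sum m c : c <= m -> summand m c <= \sum_(0 <= i < m.+1) summand m i.
Proof.
by move=> le_cm; rewrite (bigD1_seq c) ?iota_uniq ?mem_index_iota //= leq_addr.
Qed.

Lemma window_tail_le m l :
  2 ^ l * \sum_(0 <= c < m.+1 | ~~ in_window m l c) summand m c
  <= \sum_(0 <= c < m.+1) summand m c.
Proof.
set low := \sum_(0 <= c < m.+1 | c + l + 3 <= m./2) summand_bound m c.
set high := \sum_(0 <= c < m.+1 | m - m./2 + l + 3 <= c) summand_bound m c.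
have tail_le : \sum_(0 <= c < m.+1 | ~~ in_window m l c) summand m c <= low + high.
  rewrite /low /high big_mkcond [in leqRHS]big_mkcond [X in _ + X]big_mkcond.
  rewrite -big_split /=; apply: leq_sum => c _.
  have le_bound := summand_le_bound m c.
  rewrite /in_window; case: ifP => // out.
  case: ifP => is_low; first exact: leq_trans le_bound (leq_addr _ _).
  case: ifP => is_high; first by rewrite add0n.
  lia.
have central_le : central_bound m <= 2 * \sum_(0 <= c < m.+1) summand m c.
  apply: leq_trans (central_bound_le m) _.
  by rewrite leq_mul2l summand_le_sum ?orbT // leq_half_double; lia.
have := low_tail_le m l; have := high_tail_le m l; rewrite -/low -/high expnD.
have := leq_mul (leqnn (2 ^ l)) tail_le.
lia.
Qed.

Local Open Scope ring_scope.

Lemma in_windowE m l c :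
  ((m./2)%:Z - l%:Z - 2 <= c%:Z) && (c%:Z <= (m./2 + odd m)%:Z + l%:Z + 2)
  = in_window m l c.
Proof. by rewrite /in_window; have := odd_double_half m; rewrite -addnn; lia. Qed.

Lemma ceil_log2_inv (R : realType) (eps : R) : 0 < eps -> eps < 1 ->
  exists l : nat, Num.ceil (log2 eps^-1) = l%:Z /\ 1 <= eps * 2 ^+ l.
Proof.
move=> eps_gt0 eps_lt1; have ln2_gt0 : 0 < ln (2 : R) by rewrite ln_gt0 // ltr1n.
have inv_gt1 : 1 < eps^-1 by rewrite invf_gt1.
have le_ceil := ceil_ge (log2 eps^-1).
have : 0 <= Num.ceil (log2 eps^-1).
  rewrite -(ler_int R); apply: le_trans le_ceil; apply: ltW.
  by rewrite /log2 divr_gt0 // ln_gt0.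
move=> /gez0_abs def_l; exists `|Num.ceil (log2 eps^-1)|%N; split => //.
set l := `|_|%N in def_l *.
move: le_ceil; rewrite -def_l /log2 ler_pdivrMr // pmulrn mulr_natl.
rewrite -lnXn ?ltr0n // ler_ln ?posrE ?invr_gt0 ?exprn_gt0 ?ltr0n // => inv_le.
by rewrite -(ler_pM2l eps_gt0) mulfV ?gt_eqF in inv_le.
Qed.

Theorem lemma8p12 (R : realType) (n q : nat) (eps : R) :
  (2 <= q)%N -> (q < n)%N -> 0 < eps -> eps < 1 ->
  let L : int := Num.ceil (log2 (eps^-1)) in
  let t1 : int := ((n - q)./2)%:Z - L - 2 in
  let t2 : int := ((n - q)./2 + odd (n - q))%:Z + L + 2 in
  ((\sum_(0 <= c < (n - q).+1 | (t1 <= c%:Z) && (c%:Z <= t2)) term8p12 n q c)%:R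
    : R)
  >= (1 - eps) * (\sum_(0 <= c < (n - q).+1) term8p12 n q c)%:R.
Proof.
move=> _ _ eps_gt0 eps_lt1 /=; have [l [-> eps_l]] := ceil_log2_inv eps_gt0 eps_lt1.
rewrite [in X in _ <= X](eq_bigl (in_window (n - q) l)); last by move=> c; exact: in_windowE.
under eq_bigr do rewrite term8p12E.
under [in X in _ <= X]eq_bigr do rewrite term8p12E.
set m := (n - q)%N.
set w := (\sum_(0 <= c < m.+1 | in_window m l c) summand m c)%N.
set u := (\sum_(0 <= c < m.+1 | ~~ in_window m l c) summand m c)%N.
have total : (\sum_(0 <= c < m.+1) summand m c = w + u)%N by rewrite (bigID (in_window m l)).
have tail_le : 2 ^+ l * u%:R <= w%:R + u%:R :> R.
  by rewrite -natrX -natrM -natrD ler_nat -total window_tail_le.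
have u_ge0 : 0 <= u%:R :> R by [].
have w_ge0 : 0 <= w%:R :> R by [].
rewrite total natrD; nra.
Qed.
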